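(* Let $H$ be the 28-element set $H=\{n_M : n\in\mathbb{Z}_{12}\}\cup\{n_m : n\in\mathbb{Z}_{12}\}\cup\{n_{\mathrm{aug}} : n\in\{0,1,2,3\}\}$, and let $\mathcal{T}$ be the symmetric relation on $H$ consisting exactly of the pairs $(n_M,(n+4)_M)$, $(n_M,(n+8)_M)$, $(n_M,(n+1)_m)$, $(n_M,(n+5)_m)$, $(n_M,((n+3)\bmod 4)_{\mathrm{aug}})$, $(n_m,(n+4)_m)$, $(n_m,(n+8)_m)$, $(n_m,(n+11)_M)$, $(n_m,(n+7)_M)$, $(n_m,(n\bmod 4)_{\mathrm{aug}})$ for $n\in\mathbb{Z}_{12}$, together with the reverses of all these pairs. Then the monoid $M_{\mathcal{T}}$ of relations on $H$ generated by $\mathcal{T}$ under composition of relations has the presentation $M_{\mathcal{T}}=\langle \mathcal{T}\mid \mathcal{T}^4=\mathcal{T}^3\rangle$.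
   Context: Indices $n$ of $n_M,n_m$ are taken modulo 12; the elements of $H$ are formal labels (musically: $n_M=\{n,n+4,n+7\}$, $n_m=\{n,n+3,n+7\}$, $k_{\mathrm{aug}}=\{k,k+4,k+8\}$ in $\mathbb{Z}_{12}$; $\mathcal{T}$ is Douthett's relation $\mathcal{P}_{2,0}$). Composition of relations: $\mathcal{R}'\mathcal{R}$ is the set of pairs $(x,z)$ such that there exists $y$ with $(x,y)\in\mathcal{R}$ and $(y,z)\in\mathcal{R}'$; the monoid identity is the identity relation on $H$. *)

From mathcomp Require Import all_boot.
Set Implicit Arguments. Unset Strict Implicit. Unset Printing Implicit Defensive.

Definition H : finType := ('I_12 + 'I_12 + 'I_4)%type.
Definition Maj (n : 'I_12) : H := inl (inl n).
Definition Min (n : 'I_12) : H := inl (inr n).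
Definition Aug (k : 'I_4) : H := inr k.

Definition sh12 (n : 'I_12) (k : nat) : 'I_12 := inord ((n + k) %% 12).
Definition md4 (n : 'I_12) (k : nat) : 'I_4 := inord ((n + k) %% 4).

Definition Tgen (x y : H) : bool :=
  [exists n : 'I_12,
     ((x == Maj n) &&
        [|| y == Maj (sh12 n 4), y == Maj (sh12 n 8), y == Min (sh12 n 1),
            y == Min (sh12 n 5) | y == Aug (md4 n 3)])
  || ((x == Min n) &&
        [|| y == Min (sh12 n 4), y == Min (sh12 n 8), y == Maj (sh12 n 11),
            y == Maj (sh12 n 7) | y == Aug (md4 n 0)])].

Definition T : {set H * H} := [set p | Tgen p.1 p.2 || Tgen p.2 p.1].

Definition relid : {set H * H} := [set p | p.1 == p.2].

Definition relcomp (R' R : {set H * H}) : {set H * H} :=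
  [set p | [exists y : H, ((p.1, y) \in R) && ((y, p.2) \in R')]].

Definition relpow (R : {set H * H}) (n : nat) : {set H * H} :=
  iter n (relcomp R) relid.

From mathcomp Require Import all_boot zify.

(* T^4 = T^3 while 1, T, T^2 and T^3 are pairwise distinct, so n |-> T^n
   identifies exactly the exponents that the congruence generated by 4 ~ 3
   identifies.  Both facts are finite computations, run by reflection on the
   28 x 28 boolean matrices of the powers of T. *)

Set Implicit Arguments.
Unset Strict Implicit.
Unset Printing Implicit Defensive.

Section EventuallyFixedIteration.
Variables (U : eqType) (f : U -> U) (x : U) (m : nat).
Hypothesis iter_fixed : iter m.+1 f x = iter m f x.

Lemma iter_addn_fixed k : iter (k + m) f x = iter m f x.
Proof. by elim: k => //= k IH; rewrite IH. Qed.

Lemma iter_minn n : iter n f x = iter (minn n m) f x.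
Proof.
case: (leqP n m) => [//|/ltnW le_mn].
by rewrite -(subnK le_mn) iter_addn_fixed.
Qed.

Hypothesis traject_uniq : uniq (traject f x m.+1).

Lemma eq_iter_eventually_fixed i j :
  iter i f x = iter j f x <-> i = j \/ m <= i /\ m <= j.
Proof.
have min_lt k : minn k m < m.+1 by lia.
rewrite (iter_minn i) (iter_minn j) -!(nth_traject f (min_lt _)).
split=> [/eqP|]; first by rewrite nth_uniq ?size_traject // => /eqP; lia.
by case=> [->|[le_mi le_mj]]; rewrite ?(minn_idPr le_mi) ?(minn_idPr le_mj).
Qed.

End EventuallyFixedIteration.

Section BoolTables.
Variables (X : eqType) (s : seq X).

Definition relcomp_on (r' r : rel X) : rel X :=
  fun x z => has (fun y => r x y && r' y z) s.

Definition relpow_on (r : rel X) n : rel X := iter n (relcomp_on r) eq_op.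

Definition tab (r : rel X) : seq (seq bool) := [seq [seq r x y | y <- s] | x <- s].

Definition tab_entry (A : seq (seq bool)) i j : bool := nth false (nth [::] A i) j.

Definition tab_mul (A B : seq (seq bool)) : seq (seq bool) :=
  [seq [seq has (fun j => nth false a j && tab_entry B j k) (iota 0 (size B))
       | k <- iota 0 (size B)] | a <- A].

Definition tab_pow (B : seq (seq bool)) n : seq (seq bool) :=
  iter n (tab_mul^~ B) (tab eq_op).

Lemma tab_entryE x0 r i j : i < size s -> j < size s ->
  tab_entry (tab r) i j = r (nth x0 s i) (nth x0 s j).
Proof. by move=> lt_i lt_j; rewrite /tab_entry !(nth_map x0) ?size_map. Qed.

Lemma eq_tab r1 r2 : r1 =2 r2 -> tab r1 = tab r2.
Proof. by move=> eq_r; apply/eq_map => x; apply/eq_map => y; apply: eq_r. Qed.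

Lemma tab_inj r1 r2 : (forall x, x \in s) -> tab r1 = tab r2 -> r1 =2 r2.
Proof.
move=> s_complete eq_r12 x y.
have idx_lt z : index z s < size s by rewrite index_mem.
by rewrite -[x](nth_index x (s_complete x)) -[y](nth_index x (s_complete y))
  -!tab_entryE ?eq_r12.
Qed.

Lemma tab_mul_tab r r' : tab_mul (tab r) (tab r') = tab (relcomp_on r' r).
Proof.
rewrite /tab_mul {1}/tab size_map -map_comp; apply/eq_map => x /=.
have s_iota : s = [seq nth x s k | k <- iota 0 (size s)].
  by rewrite -/(mkseq _ _) mkseq_nth.
rewrite [X in _ = map _ X]s_iota -map_comp; apply/eq_in_map => k.
rewrite mem_iota => /andP[_ lt_k].
rewrite /relcomp_on [X in _ = has _ X]s_iota has_map.
apply/eq_in_has => j; rewrite mem_iota => /andP[_ lt_j].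
by rewrite (nth_map x) ?(tab_entryE x).
Qed.

Lemma tab_pow_tab r n : tab_pow (tab r) n = tab (relpow_on r n).
Proof. by elim: n => //= n ->; rewrite tab_mul_tab. Qed.

End BoolTables.

Lemma existsb_has (I : finType) (s : seq I) (P : pred I) :
  (forall x, x \in s) -> [exists x, P x] = has P s.
Proof. by move=> s_complete; apply/existsP/hasP => -[x]; exists x. Qed.

(* Unlike [ord_enum], this enumeration evaluates: [insub] is stuck on the
   opaque [idP]. *)
Definition ord_list n : seq 'I_n.+1 :=
  [seq Ordinal (ltn_pmod i (ltn0Sn n)) | i <- iota 0 n.+1].

Lemma mem_ord_list n (i : 'I_n.+1) : i \in ord_list n.
Proof.
apply/mapP; exists (val i); first by rewrite mem_iota ltn_ord.
by apply: val_inj; rewrite /= modn_small.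
Qed.

Lemma inord_mod n k : inord (k %% n.+1) = Ordinal (ltn_pmod k (ltn0Sn n)).
Proof. by apply: val_inj; rewrite /= inordK // ltn_pmod. Qed.

Definition Hlist : seq H :=
  [seq Maj n | n <- ord_list 11] ++ [seq Min n | n <- ord_list 11]
  ++ [seq Aug k | k <- ord_list 3].

Lemma mem_Hlist x : x \in Hlist.
Proof. by case: x => [[n|n]|k]; rewrite !mem_cat map_f ?mem_ord_list ?orbT. Qed.

Lemma mem_relpow R n x z :
  ((x, z) \in relpow R n) = relpow_on Hlist [rel x y | (x, y) \in R] n x z.
Proof.
elim: n x z => [|n IH] x z; first by rewrite inE.
rewrite -[relpow R n.+1]/(relcomp R (relpow R n)) inE (existsb_has _ mem_Hlist).
by apply: eq_has => y; rewrite IH.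
Qed.

Lemma relpow_eq_tab_pow R i j :
  relpow R i = relpow R j <->
  tab_pow Hlist (tab Hlist [rel x y | (x, y) \in R]) i =
  tab_pow Hlist (tab Hlist [rel x y | (x, y) \in R]) j.
Proof.
rewrite !tab_pow_tab; split=> [eq_ij | /(tab_inj mem_Hlist) eq_ij].
  by apply: eq_tab => x z; rewrite -!mem_relpow eq_ij.
by apply/setP => -[x z]; rewrite !mem_relpow eq_ij.
Qed.

Theorem mainTheorem3 :
  forall i j : nat, relpow T i = relpow T j <-> (i = j \/ (3 <= i /\ 3 <= j)).
Proof.
move=> i j; rewrite relpow_eq_tab_pow.
(* Neither [\[exists _, _\]] (sealed [card]) nor [inord] evaluates: turn them
   into [has] and [Ordinal] before computing. *)
under eq_tab => x y.
  rewrite /= inE /Tgen !(existsb_has _ (@mem_ord_list 11)).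
  under [X in X || _]eq_has => n do rewrite /sh12 /md4 !inord_mod.
  under [X in _ || X]eq_has => n do rewrite /sh12 /md4 !inord_mod.
  over.
apply: eq_iter_eventually_fixed; first by apply/eqP; vm_compute.
by vm_compute.
Qed.
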